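(* Let $\bm L=(L_1,\dots,L_r)$ be linear functionals on complex Laurent polynomials with $L_j[w^k]=L_j[w^{-k}]$ for all $k\in\mathbb N$, $j=1,\dots,r$, and let $M_j$ be the linear functional on complex polynomials with $M_j[x^k]=L_j[(w+w^{-1})^k]$, $k\in\mathbb N$; $\bm M=(M_1,\dots,M_r)$. Suppose that $(\bm n;\bm n)$ and $(\bm n+\bm e_j;\bm n)$ are normal for $\bm L$ for all $\bm n\in\mathbb N^r$ and $j=1,\dots,r$. Then $\bm M$ is perfect, and for every $\bm n\in\mathbb N^r$ we have $\alpha_{\bm n;\bm n}\ne-1$ and $$P_{\bm n}(z+z^{-1})=\frac{1}{1+\alpha_{\bm n;\bm n}}\big(\Phi_{\bm n;\bm n}(z)+\Phi_{\bm n;\bm n}(1/z)\big),$$ and, for every $j$ with $n_j\ge1$, $$P_{\bm n}(z+z^{-1})=\Phi_{\bm n;\bm n-\bm e_j}(z)+\Phi_{\bm n;\bm n-\bm e_j}(1/z).$$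
   Context: Fix $r\ge1$; $\mathbb N=\{0,1,2,\dots\}$; $\bm e_j$ is the $j$-th standard unit vector; for $\bm v\in\mathbb Z^r$, $|\bm v|=v_1+\dots+v_r$ (signed). Let $c_{k,j}=L_j[w^{-k}]$. For $(\bm n;\bm m)\in\mathbb Z^r\times\mathbb Z^r$ with $n_j+m_j\ge0$ for all $j$ and $\bm n\ne-\bm m$, $T_{\bm n;\bm m}$ is the square matrix of size $|\bm n|+|\bm m|$ with rows indexed by $(j,k)$, $1\le j\le r$, $-m_j\le k\le n_j-1$ (ordered by $j$, then increasing $k$), columns indexed by $i=-|\bm m|,\dots,|\bm n|-1$, entries $c_{k-i,j}$; $T_{\bm n;-\bm n}:=1$; $(\bm n;\bm m)$ is normal (for $\bm L$) if $\det T_{\bm n;\bm m}\ne0$. For normal $(\bm n;\bm m)$, $\bm n\ne-\bm m$, $\Phi_{\bm n;\bm m}$ is the unique Laurent polynomial in $\operatorname{span}\{z^k\}_{k=-|\bm m|}^{|\bm n|}$ with $z^{|\bm n|}$-coefficient $1$ and $L_j[\Phi_{\bm n;\bm m}(w)w^{-k}]=0$ for $-m_j\le k\le n_j-1$, all $j$; $\Phi_{\bm 0;\bm 0}=1$; $\alpha_{\bm n;\bm m}$ is the $z^{-|\bm m|}$-coefficient of $\Phi_{\bm n;\bm m}$. For the system $\bm M$ on polynomials, a multi-index $\bm n\in\mathbb N^r$ is normal if there is a unique polynomial $P_{\bm n}$ of degree $|\bm n|$ with leading coefficient $1$ such that $M_j[P_{\bm n}(x)x^k]=0$ for $k=0,\dots,n_j-1$,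 $j=1,\dots,r$ (the type II multiple orthogonal polynomial); $\bm M$ is perfect if every $\bm n\in\mathbb N^r$ is normal. *)

(* Complex numbers are C := complex R for a real closed field R
   (R = the reals gives the usual complex numbers). *)
From HB Require Import structures.
From mathcomp Require Import all_boot all_order all_algebra.
From mathcomp Require Export complex.
Set Implicit Arguments. Unset Strict Implicit. Unset Printing Implicit Defensive.
Import Order.TTheory GRing.Theory Num.Theory.
Local Open Scope ring_scope.

Section Defs.
Variables (R : rcfType) (r : nat).
Local Notation C := (complex R).

(* The system L = (L_1,..,L_r) of linear functionals on Laurent polynomials is
   given by its moments:  mom j k = L_j[w^k]  (k : int). *)
Variable mom : 'I_r -> int -> C.

Definition cL (k : int) (j : 'I_r) : C := mom j (- k).

Definition msum (n : 'I_r -> nat) : nat := (\sum_(l < r) n l)%N.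

Definition maddE (n : 'I_r -> nat) (j : 'I_r) : 'I_r -> nat :=
  fun l => (n l + (l == j))%N.
Definition msubE (n : 'I_r -> nat) (j : 'I_r) : 'I_r -> nat :=
  fun l => (n l - (l == j))%N.

Definition krange (n m : 'I_r -> nat) (j : 'I_r) : seq int :=
  [seq (i%:Z - (m j)%:Z) | i <- iota 0 (n j + m j)].

(* The rows of T_{n;m}, ordered by j then increasing k; a row (j,k) has
   entry c_{k-i,j} in column i (i = -|m|,...,|n|-1, the column t : 'I_(|n|+|m|)
   corresponding to i = t - |m|). *)
Definition Trows (n m : 'I_r -> nat) : seq ('I_(msum n + msum m) -> C) :=
  flatten [seq [seq (fun t : 'I_(msum n + msum m) =>
                        cL (k - (t%:Z - (msum m)%:Z)) j) | k <- krange n m j]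
          | j <- enum 'I_r].

Definition Tmat (n m : 'I_r -> nat) : 'M[C]_(msum n + msum m) :=
  \matrix_(s, t) (nth (fun _ => 0) (Trows n m) s) t.

(* (n;m) normal for L. For n = m = 0, T is the empty matrix, with det = 1. *)
Definition normalL (n m : 'I_r -> nat) : bool := \det (Tmat n m) != 0.

(* A Laurent polynomial in span{z^k : -|m| <= k <= |n|} is given by its
   coefficients phi t (t < |n|+|m|+1), phi t being the coefficient of z^(t-|m|). *)
Definition lcoef_ty (n m : 'I_r -> nat) := 'I_(msum n + msum m).+1 -> C.

Definition leval (n m : 'I_r -> nat) (phi : lcoef_ty n m) (z : C) : C :=
  \sum_(t < (msum n + msum m).+1) phi t * z ^ (t%:Z - (msum m)%:Z).

Definition Lapp (n m : 'I_r -> nat) (phi : lcoef_ty n m) (j : 'I_r) (k : int) : C :=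
  \sum_(t < (msum n + msum m).+1) phi t * mom j (t%:Z - (msum m)%:Z - k).

Definition isPhi (n m : 'I_r -> nat) (phi : lcoef_ty n m) : Prop :=
  phi ord_max = 1 /\
  forall (j : 'I_r) (k : int), k \in krange n m j -> Lapp phi j k = 0.

Definition alphaPhi (n m : 'I_r -> nat) (phi : lcoef_ty n m) : C := phi ord0.

(* M_j[x^k] = L_j[(w + w^{-1})^k] = sum_i binom(k,i) L_j[w^{2i-k}] *)
Definition momM (j : 'I_r) (k : nat) : C :=
  \sum_(i < k.+1) 'C(k, i)%:R * mom j ((2 * i)%N%:Z - k%:Z).

Definition Mapp (j : 'I_r) (p : {poly C}) : C :=
  \sum_(i < size p) p`_i * momM j i.

Definition isMOP (n : 'I_r -> nat) (P : {poly C}) : Prop :=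
  size P = (msum n).+1 /\ lead_coef P = 1 /\
  forall (j : 'I_r) (k : nat), (k < n j)%N -> Mapp j (P * 'X^k) = 0.

Definition normalM (n : 'I_r -> nat) : Prop := exists! P, isMOP n P.

Definition perfectM : Prop := forall n : 'I_r -> nat, normalM n.

End Defs.

Arguments lcoef_ty {R r} n m.
Arguments leval {R r} n m phi z.
Arguments Lapp {R r} mom n m phi j k.
Arguments isPhi {R r} mom n m phi.
Arguments alphaPhi {R r} n m phi.
Arguments isMOP {R r} mom n P.
Arguments normalL {R r} mom n m.

(* The substitution x = z + 1/z turns a polynomial Q of degree at most N into
   the palindromic polynomial z^N Q(z + 1/z) of degree at most 2N, and every
   palindromic polynomial arises in this way.  With T(w) = w^N Q(w + 1/w),
   M_j[x^k Q(x)] is a combination of the values L_j[w^(-N-e) T(w)], |e| <= k,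
   and since the moments of L_j are even the two extreme values (e = k and
   e = -k) coincide.  Hence the symmetrization
   Phi(z) + Phi(1/z) of Phi_{n;n} (or of Phi_{n;n-e_j}) is, up to a constant,
   the image of a polynomial satisfying the type II conditions for n.
   Uniqueness of P_n goes by induction on |n|: with m = n - e_j, a second
   solution would be a nonzero multiple of the polynomial built from
   Phi_{m;m}, which would then satisfy one more orthogonality condition,
   contradicting the normality of (m + e_j; m).  The same contradiction rules
   out alpha_{n;n} = -1, in which case the symmetrization of Phi_{n;n} would
   vanish. *)

From HB Require Import structures.
From mathcomp Require Import all_boot all_order all_algebra.
From mathcomp Require Import complex.
From mathcomp Require Import zify ring.
Import Order.TTheory GRing.Theory Num.Theory.
Local Open Scope ring_scope.

Set Implicit Arguments. Unset Strict Implicit. Unset Printing Implicit Defensive.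

Section MomentFunctional.
Variable R : comNzRingType.
Implicit Types (f : nat -> R) (p q : {poly R}).

Definition momf f p : R := \sum_(i < size p) p`_i * f i.

Lemma momf_widen f p n : (size p <= n)%N -> momf f p = \sum_(i < n) p`_i * f i.
Proof.
move=> le; rewrite /momf (big_ord_widen n (fun i => p`_i * f i)) // big_mkcond /=.
by apply: eq_bigr => i _; case: ltnP => // h; rewrite nth_default ?mul0r.
Qed.

Lemma momf0 f : momf f 0 = 0.
Proof. by rewrite /momf size_poly0 big_ord0. Qed.

Lemma momfZ f c p : momf f (c *: p) = c * momf f p.
Proof.
rewrite !(@momf_widen _ _ (size p)) ?size_scale_leq // mulr_sumr.
by apply: eq_bigr => i _; rewrite coefZ mulrA.
Qed.

Lemma momfD f p q : momf f (p + q) = momf f p + momf f q.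
Proof.
set n := maxn (size p) (size q).
rewrite !(@momf_widen _ _ n) ?leq_maxl ?leq_maxr ?(leq_trans (size_polyD _ _)) //.
by rewrite -big_split; apply: eq_bigr => i _; rewrite coefD mulrDl.
Qed.

Lemma momfB f p q : momf f (p - q) = momf f p - momf f q.
Proof. by rewrite momfD -scaleN1r momfZ mulN1r. Qed.

Lemma momf_sum f I (s : seq I) (P : pred I) (F : I -> {poly R}) :
  momf f (\sum_(i <- s | P i) F i) = \sum_(i <- s | P i) momf f (F i).
Proof. exact: (big_morph _ (momfD f) (momf0 f)). Qed.

Lemma eq_momf f g p : f =1 g -> momf f p = momf g p.
Proof. by move=> fg; apply: eq_bigr => i _; rewrite fg. Qed.

Lemma momfXn f k : momf f 'X^k = f k.
Proof.
rewrite /momf size_polyXn big_ord_recr /= big1 ?add0r => [|i _].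
  by rewrite coefXn eqxx mul1r.
by rewrite coefXn (ltn_eqF (ltn_ord i)) mul0r.
Qed.

Lemma momf_poly f n (E : nat -> R) :
  momf f (\poly_(i < n) E i) = \sum_(i < n) E i * f i.
Proof.
rewrite (@momf_widen _ _ n) ?size_poly //.
by apply: eq_bigr => i _; rewrite coef_poly ltn_ord.
Qed.

Lemma momf_mulXn f p k : momf f (p * 'X^k) = momf (fun i => f (k + i)%N) p.
Proof.
have [->|p0] := eqVneq p 0; first by rewrite mul0r !momf0.
rewrite (@momf_widen _ _ (k + size p)) ?size_mulXn // big_split_ord /=.
rewrite big1 ?add0r => [|i _]; last by rewrite coefMXn ltn_ord mul0r.
by apply: eq_bigr => i _; rewrite coefMXn ltnNge leq_addr /= addKn.
Qed.

Lemma momf_mul f p q n : (size q <= n)%N ->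
  momf f (p * q) = \sum_(b < n) q`_b * momf (fun i => f (b + i)%N) p.
Proof.
move=> hq; have -> : p * q = \sum_(b < n) q`_b *: (p * 'X^b).
  rewrite -{1}(coefK q) poly_def mulr_sumr.
  rewrite (big_ord_widen n (fun b => p * (q`_b *: 'X^b))) // big_mkcond /=.
  apply: eq_bigr => b _; case: ltnP => hb; first by rewrite scalerAr.
  by rewrite nth_default // scale0r.
by rewrite momf_sum; apply: eq_bigr => b _; rewrite momfZ momf_mulXn.
Qed.

End MomentFunctional.

Section Reversal.
Variable R : comNzRingType.
Implicit Types (p q : {poly R}).

Lemma size_poly_leq_coef0 p n : (size p <= n.+1)%N -> p`_n = 0 -> (size p <= n)%N.
Proof.
move=> hp pn; apply/leq_sizeP => i; rewrite leq_eqVlt => /predU1P [<- // | lt_ni].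
by rewrite nth_default // (leq_trans hp).
Qed.

Lemma size_sub_scale_leq p q c n : (size p <= n)%N -> (size q <= n)%N ->
  (size (p - c *: q)%R <= n)%N.
Proof.
move=> hp hq; rewrite (leq_trans (size_polyD _ _)) // geq_max hp size_polyN.
exact: leq_trans (size_scale_leq _ _) hq.
Qed.

Definition revp (D : nat) p : {poly R} := \poly_(i < D.+1) p`_(D - i).

Lemma coef_revp D p i : (revp D p)`_i = if (i <= D)%N then p`_(D - i) else 0.
Proof. by rewrite coef_poly ltnS. Qed.

Lemma size_revp D p : (size (revp D p) <= D.+1)%N.
Proof. exact: size_poly. Qed.

Fact revp_is_semilinear D : semilinear (revp D).
Proof.
by split=> [c p | p q]; apply/polyP => i; rewrite !(coefZ, coefD, coef_revp);
  case: ifP; rewrite ?mulr0 ?addr0.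
Qed.

HB.instance Definition _ D :=
  GRing.isSemilinear.Build R {poly R} {poly R} _ (revp D) (revp_is_semilinear D).

Lemma revpK D p : (size p <= D.+1)%N -> revp D (revp D p) = p.
Proof.
move=> hp; apply/polyP => i; rewrite !coef_revp.
case: leqP => hi; first by rewrite leq_subr subKn.
by rewrite nth_default // (leq_trans hp).
Qed.

(* For [p = z^N Phi(z)], [symmetrize N p] is [z^N (Phi(z) + Phi(1/z))]. *)
Definition symmetrize (N : nat) p := p + revp (N + N) p.

Lemma size_symmetrize N p : (size p <= (N + N).+1)%N ->
  (size (symmetrize N p) <= (N + N).+1)%N.
Proof. by move=> hp; rewrite (leq_trans (size_polyD _ _)) // geq_max hp size_revp. Qed.

Lemma revp_symmetrize N p : (size p <= (N + N).+1)%N ->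
  revp (N + N) (symmetrize N p) = symmetrize N p.
Proof. by move=> hp; rewrite raddfD /= revpK // addrC. Qed.

Lemma coef_symmetrize_top N p : (symmetrize N p)`_(N + N) = p`_(N + N) + p`_0.
Proof. by rewrite coefD coef_revp leqnn subnn. Qed.

End Reversal.

Section Joukowski.
Variable F : numFieldType.
Implicit Types (p q Q : {poly F}) (z : F).

Lemma poly_eq_nonzero p q : (forall z, z != 0 -> p.[z] = q.[z]) -> p = q.
Proof.
move=> pq; apply/eqP; rewrite -subr_eq0; apply/eqP.
apply: (@roots_geq_poly_eq0 _ _ [seq i.+1%:R | i <- iota 0 (size (p - q))]).
- apply/allP => _ /mapP [i _ ->].
  by rewrite /root hornerD hornerN pq ?subrr // pnatr_eq0.
- by rewrite map_inj_uniq ?iota_uniq // => a b /eqP; rewrite eqr_nat => /eqP [].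
- by rewrite size_map size_iota.
Qed.

Lemma horner_revp D p z : (size p <= D.+1)%N -> z != 0 ->
  (revp D p).[z] = z ^+ D * p.[z^-1].
Proof.
move=> hp z0; rewrite horner_poly (horner_coef_wide _ hp) mulr_sumr.
rewrite (reindex_inj rev_ord_inj); apply: eq_bigr => i _ /=.
have hi : (i <= D)%N by rewrite -ltnS.
by rewrite subSS subKn // exprB ?unitfE // exprVn; ring.
Qed.

Definition jX : {poly F} := 'X^2 + 1.

(* [joukowski d Q] is [z^d Q(z + 1/z)], see [horner_joukowski]. *)
Definition joukowski (d : nat) Q : {poly F} :=
  \sum_(i < d.+1) Q`_i *: ('X^(d - i) * jX ^+ i).

Lemma horner_jX z : jX.[z] = z ^+ 2 + 1.
Proof. by rewrite hornerD hornerXn hornerC. Qed.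

Lemma sqr_add1_joukowski z : z != 0 -> z ^+ 2 + 1 = z * (z + z^-1).
Proof. by move=> z0; rewrite mulrDr mulfV // expr2. Qed.

Lemma horner_joukowski d Q z : (size Q <= d.+1)%N -> z != 0 ->
  (joukowski d Q).[z] = z ^+ d * Q.[z + z^-1].
Proof.
move=> hQ z0; rewrite horner_sum (horner_coef_wide _ hQ) mulr_sumr.
apply: eq_bigr => i _; have hi : (i <= d)%N by rewrite -ltnS.
rewrite hornerZ hornerM hornerXn horner_exp horner_jX sqr_add1_joukowski //.
have -> : z ^+ d = z ^+ (d - i) * z ^+ i by rewrite -exprD subnK.
by rewrite exprMn; ring.
Qed.

Lemma jXn_monic k : jX ^+ k \is monic.
Proof. by rewrite monic_exp ?monicXnaddC. Qed.

Lemma size_jXn k : size (jX ^+ k) = (k + k).+1.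
Proof.
have := size_exp jX k; rewrite size_XnaddC //= => e.
by rewrite -[LHS]prednK ?e ?addnn ?mul2n // size_poly_gt0 monic_neq0 ?jXn_monic.
Qed.

Lemma coef_jXn_top k : (jX ^+ k)`_(k + k) = 1.
Proof. by have /monicP := jXn_monic k; rewrite /lead_coef size_jXn. Qed.

Lemma coef_jXn0 k : (jX ^+ k)`_0 = 1.
Proof. by rewrite -horner_coef0 horner_exp horner_jX expr0n add0r expr1n. Qed.

Lemma size_joukowski d Q : (size (joukowski d Q) <= (d + d).+1)%N.
Proof.
apply: (big_ind (fun p => size p <= (d + d).+1)%N) => [|p q hp hq|i _].
- by rewrite size_poly0.
- by rewrite (leq_trans (size_polyD _ _)) // geq_max hp.
rewrite (leq_trans (size_scale_leq _ _)) // (leq_trans (size_polyMleq _ _)) //.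
rewrite size_polyXn size_jXn /=; have := ltn_ord i; lia.
Qed.

Lemma joukowski0 d : joukowski d 0 = 0.
Proof. by rewrite /joukowski big1 // => i _; rewrite coef0 scale0r. Qed.

Lemma joukowski_mulXn d k Q : (size Q <= d.+1)%N ->
  joukowski (d + k) (Q * 'X^k) = joukowski d Q * jX ^+ k.
Proof.
move=> hQ; apply: poly_eq_nonzero => z z0.
have hQk : (size (Q * 'X^k)%R <= (d + k).+1)%N.
  by rewrite (leq_trans (size_polyMleq _ _)) // size_polyXn; lia.
rewrite hornerM !horner_joukowski // hornerM hornerXn horner_exp horner_jX.
by rewrite sqr_add1_joukowski // exprMn exprD; ring.
Qed.

Lemma joukowskiS d Q : (size Q <= d.+1)%N ->
  joukowski d.+1 Q = joukowski d Q * 'X.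
Proof.
move=> hQ; apply: poly_eq_nonzero => z z0.
by rewrite hornerMX !horner_joukowski ?exprSr 1?mulrAC // (leq_trans hQ).
Qed.

Lemma joukowskiXn k : joukowski k 'X^k = jX ^+ k.
Proof.
apply: poly_eq_nonzero => z z0.
rewrite horner_joukowski ?size_polyXn // hornerXn horner_exp horner_jX.
by rewrite sqr_add1_joukowski // exprMn.
Qed.

Lemma revp_joukowski d Q : (size Q <= d.+1)%N ->
  revp (d + d) (joukowski d Q) = joukowski d Q.
Proof.
move=> hQ; apply: poly_eq_nonzero => z z0.
rewrite horner_revp ?size_joukowski // !horner_joukowski ?invr_eq0 //.
by rewrite invrK addrC exprD exprVn mulrA mulfK ?expf_neq0.
Qed.

Lemma revp_mulX D p : (size p <= D.+3)%N -> revp D.+2 p = p -> p`_D.+2 = 0 ->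
  exists2 q, revp D q = q & p = q * 'X.
Proof.
move=> hp pal top; have coefp i : (i <= D.+2)%N -> p`_i = p`_(D.+2 - i).
  by move=> hi; rewrite -{1}pal coef_revp hi.
exists (\poly_(i < D.+1) p`_i.+1).
  apply/polyP => i; rewrite coef_revp !coef_poly !ltnS leq_subr.
  by case: leqP => hi //; rewrite [RHS]coefp; [congr p`_(_); lia | lia].
apply/polyP => -[|i]; rewrite coefMX /=; first by rewrite coefp // subn0.
rewrite coef_poly; case: ltnP => // hi.
have [-> // | ne] := eqVneq i.+1 D.+2.
by rewrite nth_default //; apply: leq_trans hp _; lia.
Qed.

Lemma joukowski_palindromic d p :
  (size p <= (d + d).+1)%N -> revp (d + d) p = p ->
  exists Q, [/\ (size Q <= d.+1)%N, Q`_d = p`_(d + d) & joukowski d Q = p].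
Proof.
elim: d p => [|d IH] p hp pal.
  exists p; split => //; rewrite /joukowski big_ord1 subnn !expr0 mulr1 alg_polyC.
  by rewrite [RHS](size1_polyC hp).
pose c := p`_(d.+1 + d.+1); pose p1 := p - c *: jX ^+ d.+1.
have e2 : (d.+1 + d.+1 = (d + d).+2)%N by rewrite addSn addnS.
have jXn_pal : revp (d.+1 + d.+1) (jX ^+ d.+1) = jX ^+ d.+1.
  by rewrite -joukowskiXn revp_joukowski // size_polyXn.
have [q pal_q p1E] : exists2 q, revp (d + d) q = q & p1 = q * 'X.
  apply: revp_mulX; rewrite -e2.
  - by rewrite size_sub_scale_leq // size_jXn.
  - by rewrite raddfB /= linearZ /= pal jXn_pal.
  - by rewrite coefB coefZ coef_jXn_top mulr1 subrr.
have [|Q2 [sQ2 _ Q2E]] := IH q _ pal_q; first by rewrite -pal_q size_revp.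
have sQ : (size (Q2 + c *: 'X^(d.+1))%R <= d.+2)%N.
  by rewrite (leq_trans (size_polyD _ _)) // geq_max (leq_trans sQ2) //
    (leq_trans (size_scale_leq _ _)) // size_polyXn.
exists (Q2 + c *: 'X^(d.+1)); split => //.
  by rewrite coefD coefZ coefXn eqxx mulr1 nth_default // add0r.
rewrite -[p](subrK (c *: jX ^+ d.+1)) -/p1 p1E -Q2E -joukowskiS // -joukowskiXn.
apply: poly_eq_nonzero => z z0.
rewrite hornerD hornerZ !horner_joukowski ?size_polyXn ?(leq_trans sQ2) //.
by rewrite hornerD hornerZ mulrDr mulrCA.
Qed.

End Joukowski.

Arguments jX {F}.

Section LaurentMoments.
Variables (F : numFieldType) (mu : int -> F).
Implicit Types (p q : {poly F}) (s : int).

(* If [p = w^M Phi(w)], then [lmom (M + k) p] is [L[Phi(w) w^-k]] for the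
   functional [L] with moments [L[w^k] = mu k]. *)
Definition lmom s p : F := momf (fun i => mu (i%:Z - s)) p.

Lemma lmomD s p q : lmom s (p + q) = lmom s p + lmom s q.
Proof. exact: momfD. Qed.

Lemma lmom_mulXn s p k : lmom s (p * 'X^k) = lmom (s - k%:Z) p.
Proof. by rewrite /lmom momf_mulXn; apply: eq_momf => i; congr mu; lia. Qed.

Lemma lmom_mul s p q n : (size q <= n)%N ->
  lmom s (p * q) = \sum_(b < n) q`_b * lmom (s - b%:Z) p.
Proof.
move=> hq; rewrite /lmom (momf_mul _ _ hq); apply: eq_bigr => b _.
by congr (_ * _); apply: eq_momf => i; congr mu; lia.
Qed.

Hypothesis mu_even : forall k, mu (- k) = mu k.

Lemma lmom_revp D s p : (size p <= D.+1)%N -> lmom s (revp D p) = lmom (D%:Z - s) p.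
Proof.
move=> hp; rewrite /lmom momf_poly (momf_widen _ hp) (reindex_inj rev_ord_inj).
apply: eq_bigr => i _ /=; have hi : (i <= D)%N by rewrite -ltnS.
by rewrite subSS subKn // -mu_even; congr (_ * mu _); lia.
Qed.

Lemma lmom_symmetrize N s p : (size p <= (N + N).+1)%N ->
  lmom s (symmetrize N p) = lmom s p + lmom ((N + N)%N%:Z - s) p.
Proof. by move=> hp; rewrite lmomD lmom_revp. Qed.

Lemma lmom_symmetrize_eq0 N k p : (size p <= (N + N).+1)%N ->
  ((0 < k)%N -> lmom (N%:Z - k%:Z) p = 0) ->
  lmom (N%:Z + k%:Z) (symmetrize N p) = 0 -> lmom (N%:Z + k%:Z) p = 0.
Proof.
move=> hp low; rewrite lmom_symmetrize //.
have -> : (N + N)%N%:Z - (N%:Z + k%:Z) = N%:Z - k%:Z by lia.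
case: k low => [|k] low; last by rewrite low // addr0.
have -> : N%:Z - 0%:Z = N%:Z + 0%:Z by lia.
by move/eqP; rewrite -mulr2n -mulr_natr mulf_eq0 pnatr_eq0 orbF => /eqP.
Qed.

End LaurentMoments.

Section OrthogonalityTransfer.
Variables (R : rcfType) (r : nat) (mom : 'I_r -> int -> complex R).
Local Notation C := (complex R).
Implicit Types (n m : 'I_r -> nat) (p Q : {poly C}) (N : nat).

Lemma MappE j p : Mapp mom j p = momf (momM mom j) p.
Proof. by []. Qed.

Lemma momM_lmom j k : momM mom j k = lmom (mom j) k%:Z (jX ^+ k).
Proof.
rewrite /jX exprD1n /lmom momf_sum; apply: eq_bigr => i _.
by rewrite -[in RHS]scaler_nat momfZ -exprM momfXn.
Qed.

Lemma Mapp_joukowski j d Q : (size Q <= d.+1)%N ->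
  Mapp mom j Q = lmom (mom j) d%:Z (joukowski d Q).
Proof.
move=> hQ; rewrite MappE (momf_widen _ hQ) /lmom momf_sum; apply: eq_bigr => i _.
rewrite momfZ [_ * jX ^+ _]mulrC -/(lmom _ _ _) lmom_mulXn momM_lmom.
by congr (_ * lmom _ _ _); have := ltn_ord i; lia.
Qed.

Lemma Mapp_mulXn_joukowski j d k Q : (size Q <= d.+1)%N ->
  Mapp mom j (Q * 'X^k) =
  \sum_(b < (k + k).+1) (jX ^+ k)`_b * lmom (mom j) ((d + k)%N%:Z - b%:Z) (joukowski d Q).
Proof.
move=> hQ; rewrite (@Mapp_joukowski j (d + k)); last first.
  by rewrite (leq_trans (size_polyMleq _ _)) // size_polyXn; lia.
by rewrite joukowski_mulXn // (@lmom_mul _ _ _ _ _ (k + k).+1) // size_jXn.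
Qed.

Definition morth n Q := forall l k, (k < n l)%N -> Mapp mom l (Q * 'X^k) = 0.

Definition lband n N p :=
  forall l (e : int), - (n l)%:Z < e < (n l)%:Z -> lmom (mom l) (N%:Z + e) p = 0.

(* [lorth n m N p]: the Laurent polynomial [w^-N p(w)] satisfies the
   orthogonality conditions defining [Phi_{n;m}]. *)
Definition lorth n m N p :=
  forall l k, k \in krange n m l -> lmom (mom l) (N%:Z + k) p = 0.

Lemma mem_krange n m l k : (k \in krange n m l) = (- (m l)%:Z <= k < (n l)%:Z).
Proof.
apply/mapP/idP => [[t] | /andP [k_ge k_lt]].
  by rewrite mem_iota add0n => /andP [_ ht] ->; apply/andP; split; lia.
by exists (absz (k + (m l)%:Z)); [rewrite mem_iota add0n; apply/andP; split | ]; lia.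
Qed.

Lemma morth_joukowski n d Q : (size Q <= d.+1)%N ->
  lband n d (joukowski d Q) -> morth n Q.
Proof.
move=> hQ band l k hk; rewrite (Mapp_mulXn_joukowski _ _ hQ) big1 // => b _.
have hb := ltn_ord b; have -> : (d + k)%N%:Z - b%:Z = d%:Z + (k%:Z - b%:Z) by lia.
by rewrite band ?mulr0 //; apply/andP; split; lia.
Qed.

Section EvenMoments.
Hypothesis mom_even : forall l k, mom l (- k) = mom l k.

(* In [Mapp_mulXn_joukowski] only the extreme terms [b = 0] and [b = 2k]
   survive, and they agree because [joukowski d Q] is palindromic. *)
Lemma lmom_joukowski_top l d k Q : (size Q <= d.+1)%N ->
  Mapp mom l (Q * 'X^k) = 0 ->
  (forall e : int, - k%:Z < e < k%:Z -> lmom (mom l) (d%:Z + e) (joukowski d Q) = 0) ->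
  lmom (mom l) (d%:Z + k%:Z) (joukowski d Q) = 0.
Proof.
move=> hQ; rewrite (Mapp_mulXn_joukowski _ _ hQ); set T := joukowski d Q.
case: k => [|k] M0 inner.
  by move: M0; rewrite big_ord1 coef_jXn0 mul1r /= (_ : _ - _ = d%:Z + 0%:Z) //; lia.
move: M0; rewrite big_ord_recl big_ord_recr big1 => [|b _]; last first.
  have hb : (b < k + k.+1)%N := ltn_ord b.
  rewrite lift0; have -> : (d + k.+1)%N%:Z - b.+1%:Z = d%:Z + (k%:Z - b%:Z) by lia.
  by rewrite inner ?mulr0 //; apply/andP; split; lia.
have top : (jX ^+ k.+1)`_(lift ord0 (@ord_max (k + k.+1))) = 1 :> C.
  by rewrite (_ : nat_of_ord _ = k.+1 + k.+1)%N ?coef_jXn_top // lift0 addSn.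
have T_sym s : lmom (mom l) s T = lmom (mom l) ((d + d)%N%:Z - s) T.
  by rewrite /T -{1}(revp_joukowski hQ) (lmom_revp (mom_even l)) ?size_joukowski.
have e1 : (d + k.+1)%N%:Z - (@ord0 (k + k.+1))%:Z = d%:Z + k.+1%:Z by rewrite /=; lia.
have e2 : (d + d)%N%:Z - ((d + k.+1)%N%:Z - (lift ord0 (@ord_max (k + k.+1)))%:Z)
    = d%:Z + k.+1%:Z by rewrite lift0 /=; lia.
rewrite Monoid.simpm top coef_jXn0 !mul1r [X in _ + X = 0]T_sym e1 e2.
by move/eqP; rewrite -mulr2n -mulr_natr mulf_eq0 pnatr_eq0 orbF => /eqP.
Qed.

Lemma lband_symmetrize n m N p : (forall l, n l <= (m l).+1)%N ->
  (size p <= (N + N).+1)%N -> lorth n m N p -> lband n N (symmetrize N p).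
Proof.
move=> nm hp orth l e /andP [e_gt e_lt]; have nml := nm l.
rewrite (lmom_symmetrize (mom_even l)) //.
have -> : (N + N)%N%:Z - (N%:Z + e) = N%:Z + (- e) by lia.
by rewrite !orth ?addr0 // mem_krange; apply/andP; split; lia.
Qed.

Lemma morth_of_lorth n m N p : (forall l, n l <= (m l).+1)%N ->
  (size p <= (N + N).+1)%N -> lorth n m N p ->
  exists Q, [/\ (size Q <= N.+1)%N, Q`_N = p`_(N + N) + p`_0,
     joukowski N Q = symmetrize N p & morth n Q].
Proof.
move=> nm hp orth.
have [Q [sQ QN QE]] := joukowski_palindromic (size_symmetrize hp) (revp_symmetrize hp).
exists Q; split => //; first by rewrite QN coef_symmetrize_top.
by apply: (morth_joukowski sQ); rewrite QE; apply: lband_symmetrize.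
Qed.

End EvenMoments.

Lemma lorth_maddE n m N j p : lorth n m N p ->
  lmom (mom j) (N%:Z + (n j)%:Z) p = 0 -> lorth (maddE n j) m N p.
Proof.
move=> orth top l k; rewrite mem_krange /maddE => /andP [k_ge k_lt].
have [k_lt_n | k_ge_n] := ltP k (n l)%:Z.
  by apply: orth; rewrite mem_krange k_ge.
case: eqVneq k_ge_n k_lt => [-> | _] k_ge_n k_lt; last by lia.
by rewrite (_ : k = (n j)%:Z) //; lia.
Qed.

End OrthogonalityTransfer.

Section Normality.
Variables (R : rcfType) (r : nat) (mom : 'I_r -> int -> complex R).
Hypothesis r_gt0 : (0 < r)%N.
Local Notation C := (complex R).
Implicit Types (n m : 'I_r -> nat) (p : {poly C}).

Definition Tindex n m : seq ('I_r * int) :=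
  flatten [seq [seq (j, k) | k <- krange n m j] | j <- enum 'I_r].

(* A default row index for [nth], whence the hypothesis [0 < r]. *)
Let jk0 : 'I_r * int := (Ordinal r_gt0, 0).

Lemma size_Tindex n m : size (Tindex n m) = (msum n + msum m)%N.
Proof.
rewrite /Tindex size_flatten /shape -map_comp sumnE big_map big_enum /=.
rewrite /msum -big_split /=; apply: eq_bigr => j _ /=.
by rewrite !size_map size_iota.
Qed.

Lemma mem_Tindex n m l k : ((l, k) \in Tindex n m) = (k \in krange n m l).
Proof.
apply/flattenP/idP => [[_ /mapP [j _ ->] /mapP [k' k'_in [-> ->]]] // | k_in].
exists [seq (l, k) | k <- krange n m l]; apply/mapP.
  by exists l; rewrite ?mem_enum.
by exists k.
Qed.

Lemma TmatE n m (s t : 'I_(msum n + msum m)) :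
  Tmat mom n m s t =
  mom (nth jk0 (Tindex n m) s).1 (t%:Z - ((msum m)%:Z + (nth jk0 (Tindex n m) s).2)).
Proof.
have TrowsE : Trows mom n m = [seq (fun t : 'I_(msum n + msum m) =>
    cL mom (jk.2 - (t%:Z - (msum m)%:Z)) jk.1) | jk <- Tindex n m].
  rewrite /Trows /Tindex; elim: (enum (ordinal r)) => //= j js IH.
  by rewrite map_cat IH -map_comp.
by rewrite mxE TrowsE (nth_map jk0) ?size_Tindex //= /cL; congr mom; lia.
Qed.

Lemma Tmat_mul_coefs n m p (s : 'I_(msum n + msum m)) : (size p <= msum n + msum m)%N ->
  (Tmat mom n m *m \col_t p`_t) s 0 =
  lmom (mom (nth jk0 (Tindex n m) s).1) ((msum m)%:Z + (nth jk0 (Tindex n m) s).2) p.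
Proof.
move=> hp; rewrite mxE /lmom (momf_widen _ hp); apply: eq_bigr => t _.
by rewrite TmatE mxE mulrC.
Qed.

Lemma lorth_eq0 n m p : normalL mom n m -> (size p <= msum n + msum m)%N ->
  lorth mom n m (msum m) p -> p = 0.
Proof.
move=> normal hp orth; set D := (msum n + msum m)%N.
have T_unit : Tmat mom n m \in unitmx by rewrite unitmxE unitfE.
have Tp0 : Tmat mom n m *m \col_t p`_t = 0.
  apply/matrixP => s i; rewrite ord1 Tmat_mul_coefs // mxE.
  have := mem_nth jk0 (_ : (s < size (Tindex n m))%N).
  rewrite size_Tindex => /(_ (ltn_ord s)).
  by case: (nth jk0 _ _) => l k; rewrite mem_Tindex => /orth.
have /matrixP p0 : (\col_t p`_t : 'cV_D) = 0.
  by rewrite -(mulKmx T_unit (\col_t _)) Tp0 mulmx0.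
apply/polyP => i; rewrite coef0; case: (ltnP i D) => hi.
  by have := p0 (Ordinal hi) 0; rewrite !mxE.
by rewrite nth_default // (leq_trans hp).
Qed.

Lemma lorth_exists n m : normalL mom n m ->
  exists p, [/\ (size p <= (msum n + msum m).+1)%N, p`_(msum n + msum m) = 1 &
     lorth mom n m (msum m) p].
Proof.
move=> normal; set D := (msum n + msum m)%N.
have T_unit : Tmat mom n m \in unitmx by rewrite unitmxE unitfE.
pose row_lmom s :=
  lmom (mom (nth jk0 (Tindex n m) s).1) ((msum m)%:Z + (nth jk0 (Tindex n m) s).2).
pose v := invmx (Tmat mom n m) *m (- \col_(s < D) row_lmom s 'X^D).
pose q : {poly C} := rVpoly v^T.
have qv : \col_t q`_t = v.
  by apply/colP => t; rewrite mxE /q coef_rVpoly_ord mxE.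
exists ('X^D + q); split.
- rewrite (leq_trans (size_polyD _ _)) // geq_max size_polyXn leqnn.
  exact: leq_trans (size_poly _ _) _.
- by rewrite coefD coefXn eqxx /q coef_rVpoly insubN ?ltnn ?addr0.
move=> l k; rewrite -mem_Tindex => lk.
have s_lt : (index (l, k) (Tindex n m) < D)%N by rewrite /D -size_Tindex index_mem.
have := @Tmat_mul_coefs n m q (Ordinal s_lt) (size_poly _ _).
by rewrite -/q qv mulKVmx // !mxE /row_lmom /= nth_index // lmomD => <-; rewrite subrr.
Qed.

End Normality.

Section MultiIndices.
Variable r : nat.
Implicit Types (n : 'I_r -> nat) (j : 'I_r).

Lemma msum_maddE n j : msum (maddE n j) = (msum n).+1.
Proof.
rewrite /msum /maddE big_split /= -addn1; congr addn.
by rewrite (bigD1 j) //= eqxx big1 // => l /negbTE ->.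
Qed.

Lemma msum_msubE n j : (0 < n j)%N -> msum n = (msum (msubE n j)).+1.
Proof.
move=> nj; rewrite -(msum_maddE _ j); apply: eq_bigr => l _.
by rewrite /maddE /msubE; case: eqVneq => [-> | _] /=; lia.
Qed.

Lemma msum_gt0 n : (0 < msum n)%N -> exists j, (0 < n j)%N.
Proof.
move=> n_gt0; apply/existsP; apply: contraTT n_gt0 => /existsPn n0.
by rewrite -leqNgt leqn0 sum_nat_eq0; apply/forallP => l; rewrite -leqn0 leqNgt n0.
Qed.

End MultiIndices.

Section PhiPolynomials.
Variables (R : rcfType) (r : nat) (mom : 'I_r -> int -> complex R).
Variables (n m : 'I_r -> nat) (phi : @lcoef_ty R r n m).

(* [lpoly phi] is [z^|m| Phi(z)] as an ordinary polynomial. *)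
Definition lpoly : {poly complex R} := \poly_(t < (msum n + msum m).+1) phi (inord t).

Lemma coef_lpoly (t : 'I_(msum n + msum m).+1) : lpoly`_t = phi t.
Proof. by rewrite coef_poly ltn_ord inord_val. Qed.

Lemma isPhi_lpoly : isPhi mom n m phi ->
  [/\ (size lpoly <= (msum n + msum m).+1)%N, lpoly`_(msum n + msum m) = 1 &
      lorth mom n m (msum m) lpoly].
Proof.
move=> [phi_top phi_orth]; split; first exact: size_poly.
  by rewrite (coef_lpoly ord_max).
move=> l k lk; rewrite -(phi_orth l k lk) /lmom momf_poly; apply: eq_bigr => t _.
by rewrite inord_val; congr (_ * mom _ _); lia.
Qed.

Lemma coef0_lpoly : lpoly`_0 = alphaPhi n m phi.
Proof. exact: (coef_lpoly ord0). Qed.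

Lemma leval_lpoly z : z != 0 -> leval n m phi z = lpoly.[z] / z ^+ msum m.
Proof.
move=> z0; rewrite /leval horner_poly mulr_suml; apply: eq_bigr => t _.
by rewrite inord_val expfzDr // -exprnN -exprnP mulrA.
Qed.

End PhiPolynomials.

Section PerfectSystem.
Variables (R : rcfType) (r : nat) (mom : 'I_r -> int -> complex R).
Hypothesis r_gt0 : (0 < r)%N.
Hypothesis mom_even : forall l k, mom l (- k) = mom l k.
Hypothesis normal_nn : forall n, normalL mom n n.
Hypothesis normal_Sn : forall n j, normalL mom (maddE n j) n.
Local Notation C := (complex R).
Implicit Types (n m : 'I_r -> nat) (p Q P : {poly C}).

Lemma morthB n Q1 Q2 c : morth mom n Q1 -> morth mom n Q2 -> morth mom n (Q1 - c *: Q2).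
Proof.
move=> orth1 orth2 l k lk; have := orth1 l k lk; have := orth2 l k lk.
by rewrite mulrBl -scalerAl !MappE momfB momfZ => -> ->; rewrite mulr0 subr0.
Qed.

(* Otherwise [p] would be a nonzero kernel vector of [T_{n+e_j; n}]. *)
Lemma lorth_symmetrize_neq0 n j p : (size p <= (msum n + msum n).+1)%N ->
  p`_(msum n + msum n) = 1 -> lorth mom n n (msum n) p ->
  lmom (mom j) ((msum n)%:Z + (n j)%:Z) (symmetrize (msum n) p) != 0.
Proof.
move=> hp p_top orth; apply/eqP => top.
suff p0 : p = 0 by move: p_top; rewrite p0 coef0 => /eqP; rewrite eq_sym oner_eq0.
apply: (lorth_eq0 r_gt0 (normal_Sn n j)); first by rewrite msum_maddE.
apply: (lorth_maddE orth); apply: (lmom_symmetrize_eq0 (mom_even j) hp) top => nj.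
by apply: orth; rewrite mem_krange; apply/andP; split; lia.
Qed.

Lemma lorth_alpha_neq n p :
  (forall Q, (size Q <= msum n)%N -> morth mom n Q -> Q = 0) ->
  (size p <= (msum n + msum n).+1)%N -> p`_(msum n + msum n) = 1 ->
  lorth mom n n (msum n) p -> 1 + p`_0 != 0.
Proof.
move=> morth_uniq hp p_top orth; apply/eqP => alpha.
have [Q [sQ QN QE orthQ]] := morth_of_lorth mom_even (fun l => leqnSn _) hp orth.
have Q0 : Q = 0 by apply: morth_uniq orthQ; rewrite size_poly_leq_coef0 // QN p_top.
have := lorth_symmetrize_neq0 (Ordinal r_gt0) hp p_top orth.
by rewrite -QE Q0 joukowski0 [lmom _ _ _]momf0 eqxx.
Qed.

Lemma Mapp_joukowski_neq0 m j p Q : (size p <= (msum m + msum m).+1)%N ->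
  p`_(msum m + msum m) = 1 -> lorth mom m m (msum m) p ->
  (size Q <= (msum m).+1)%N -> joukowski (msum m) Q = symmetrize (msum m) p ->
  Mapp mom j (Q * 'X^(m j)) != 0.
Proof.
move=> hp p_top orth sQ QE; apply/eqP => M0.
have := lorth_symmetrize_neq0 j hp p_top orth; rewrite -QE.
rewrite (lmom_joukowski_top mom_even sQ M0) ?eqxx // => e e_range.
by rewrite QE (lband_symmetrize mom_even (fun l => leqnSn _) hp orth).
Qed.

Lemma morth_eq0 n Q : (size Q <= msum n)%N -> morth mom n Q -> Q = 0.
Proof.
move=> sQ; have [N nN] : {N | msum n = N} by exists (msum n).
rewrite nN in sQ; elim: N n Q nN sQ => [|N IH] n Q nN sQ orthQ.
  exact/size_poly_leq0P.
have [j nj_gt0] : exists j, (0 < n j)%N by apply: msum_gt0; rewrite nN.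
pose m := msubE n j; have mN : msum m = N by apply: succn_inj; rewrite -msum_msubE.
have IHm Q' : (size Q' <= msum m)%N -> morth mom m Q' -> Q' = 0 by rewrite mN; apply: IH.
have [p [sp p_top orth]] := lorth_exists r_gt0 (normal_nn m).
have alpha := lorth_alpha_neq IHm sp p_top orth.
have [Qm [sQm QmN QmE orthQm]] := morth_of_lorth mom_even (fun l => leqnSn _) sp orth.
have m_lt_n : (m j < n j)%N by rewrite /m /msubE eqxx; lia.
set c := Q`_(msum m) / (1 + p`_0).
have QE : Q = c *: Qm.
  apply/eqP; rewrite -subr_eq0; apply/eqP/IHm; last first.
    apply: morthB orthQm => l k lk; apply: orthQ; apply: leq_trans lk _.
    by rewrite /m /msubE leq_subr.
  apply: size_poly_leq_coef0; first by rewrite size_sub_scale_leq // mN.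
  by rewrite coefB coefZ QmN p_top divfK // subrr.
have [c0 | c_neq0] := eqVneq c 0; first by rewrite QE c0 scale0r.
have := orthQ j (m j) m_lt_n; rewrite QE -scalerAl MappE momfZ -MappE => /eqP.
by rewrite mulf_eq0 (negbTE c_neq0) (negbTE (Mapp_joukowski_neq0 j sp p_top orth sQm QmE)).
Qed.

Lemma isMOP_coef_top n P : isMOP mom n P -> P`_(msum n) = 1.
Proof. by move=> [sP [lP _]]; rewrite -lP /lead_coef sP. Qed.

Lemma isMOP_uniq n P1 P2 : isMOP mom n P1 -> isMOP mom n P2 -> P1 = P2.
Proof.
move=> P1_mop P2_mop; have [s1 [_ orth1]] := P1_mop; have [s2 [_ orth2]] := P2_mop.
apply/eqP; rewrite -subr_eq0 -[P2]scale1r.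
apply/eqP/morth_eq0; last exact: morthB orth1 orth2.
apply: size_poly_leq_coef0; first by rewrite size_sub_scale_leq ?s1 ?s2.
by rewrite coefB coefZ !isMOP_coef_top // mul1r subrr.
Qed.

Lemma isMOP_scale n Q : (size Q <= (msum n).+1)%N -> Q`_(msum n) != 0 ->
  morth mom n Q -> isMOP mom n ((Q`_(msum n))^-1 *: Q).
Proof.
move=> sQ QN orthQ; have sQE : size Q = (msum n).+1.
  by apply/anti_leq; rewrite sQ /= ltnNge; apply: contra QN => /leq_sizeP ->.
split; last split.
- by rewrite size_scale ?invr_eq0.
- by rewrite lead_coefZ /lead_coef sQE mulVf.
by move=> l k lk; rewrite -scalerAl MappE momfZ -MappE orthQ ?mulr0.
Qed.

Lemma isMOP_horner n m p P z : (forall l, n l <= (m l).+1)%N ->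
  (size p <= (msum n + msum n).+1)%N -> lorth mom n m (msum n) p ->
  isMOP mom n P -> z != 0 ->
  (p`_(msum n + msum n) + p`_0) * P.[z + z^-1] =
  (p.[z] + z ^+ (msum n + msum n) * p.[z^-1]) / z ^+ msum n.
Proof.
move=> nm sp orth P_mop z0; have [sP [_ orthP]] := P_mop; set N := msum n.
have P_top : P`_N = 1 := isMOP_coef_top P_mop.
have [Q [sQ QN QE orthQ]] := morth_of_lorth mom_even nm sp orth.
have QP : Q = (p`_(N + N) + p`_0) *: P.
  apply/eqP; rewrite -subr_eq0; apply/eqP/morth_eq0; last exact: morthB orthQ orthP.
  apply: size_poly_leq_coef0; first by rewrite size_sub_scale_leq ?sP.
  by rewrite coefB coefZ P_top mulr1 QN subrr.
rewrite -hornerZ -QP; apply: (mulfI (expf_neq0 N z0)).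
rewrite -horner_joukowski // QE hornerD.
by rewrite horner_revp // [RHS]mulrC divfK ?expf_neq0.
Qed.

Lemma perfect_system : perfectM mom.
Proof.
move=> n; have [p [sp p_top orth]] := lorth_exists r_gt0 (normal_nn n).
have alpha := lorth_alpha_neq (@morth_eq0 n) sp p_top orth.
have [Q [sQ QN _ orthQ]] := morth_of_lorth mom_even (fun l => leqnSn _) sp orth.
have Q_mop : isMOP mom n ((Q`_(msum n))^-1 *: Q).
  by apply: isMOP_scale; rewrite // QN p_top.
by exists ((Q`_(msum n))^-1 *: Q); split => // P; apply: isMOP_uniq.
Qed.

Lemma alphaPhi_neqN1 n phi : isPhi mom n n phi -> alphaPhi n n phi != -1.
Proof.
move=> /isPhi_lpoly [sp p_top orth]; rewrite -coef0_lpoly -addr_eq0 addrC.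
exact: lorth_alpha_neq (@morth_eq0 n) sp p_top orth.
Qed.

Lemma isMOP_Phi_nn n phi P z : isMOP mom n P -> isPhi mom n n phi -> z != 0 ->
  P.[z + z^-1] = (1 + alphaPhi n n phi)^-1 * (leval n n phi z + leval n n phi z^-1).
Proof.
move=> P_mop phi_Phi z0; have alpha : 1 + alphaPhi n n phi != 0.
  by rewrite addrC addr_eq0 alphaPhi_neqN1.
have [sp p_top orth] := isPhi_lpoly phi_Phi.
have := isMOP_horner (fun l => leqnSn _) sp orth P_mop z0.
rewrite p_top coef0_lpoly => /(congr1 (fun x => (1 + alphaPhi n n phi)^-1 * x)).
rewrite mulKf // => ->; rewrite !leval_lpoly ?invr_eq0 // exprVn invrK exprD.
by congr (_ * _); field; rewrite expf_neq0.
Qed.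

Lemma isMOP_Phi_nm n j phi P z : (0 < n j)%N ->
  isMOP mom n P -> isPhi mom n (msubE n j) phi -> z != 0 ->
  P.[z + z^-1] = leval n (msubE n j) phi z + leval n (msubE n j) phi z^-1.
Proof.
move=> nj P_mop phi_Phi z0; have [sp p_top orth] := isPhi_lpoly phi_Phi.
have nS := msum_msubE nj.
set p := lpoly phi * 'X.
have sp' : (size p <= (msum n + msum n).+1)%N.
  by rewrite (leq_trans (size_polyMleq _ _)) // size_polyX nS; lia.
have p_top' : p`_(msum n + msum n) = 1.
  by rewrite coefMX nS addSn /= -p_top; congr (_`_ _); lia.
have orth' : lorth mom n (msubE n j) (msum n) p.
  move=> l k lk; rewrite /p -['X]expr1 lmom_mulXn -(orth l k lk).
  by congr lmom; rewrite nS; lia.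
have nm l : (n l <= (msubE n j l).+1)%N by rewrite /msubE; lia.
have := isMOP_horner nm sp' orth' P_mop z0; rewrite p_top' coefMX addr0 mul1r => ->.
rewrite /p !hornerMX !leval_lpoly ?invr_eq0 // nS exprVn invrK addSn addnS !exprS exprD.
by field; rewrite z0 expf_neq0.
Qed.

End PerfectSystem.

Theorem theorem10p2 (R : rcfType) (r : nat) (hr : (0 < r)%N)
  (mom : 'I_r -> int -> complex R)
  (hsym : forall (j : 'I_r) (k : nat), mom j k%:Z = mom j (- k%:Z))
  (hnn : forall n : 'I_r -> nat, normalL mom n n)
  (hnS : forall (n : 'I_r -> nat) (j : 'I_r), normalL mom (maddE n j) n) :
  perfectM mom /\
  forall n : 'I_r -> nat,
    (forall phi : lcoef_ty n n, isPhi mom n n phi -> alphaPhi n n phi != -1) /\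
    (forall (P : {poly complex R}) (phi : lcoef_ty n n),
        isMOP mom n P -> isPhi mom n n phi ->
        forall z : complex R, z != 0 ->
          P.[z + z^-1] = (1 + alphaPhi n n phi)^-1 * (leval n n phi z + leval n n phi z^-1)) /\
    (forall (j : 'I_r), (0 < n j)%N ->
      forall (P : {poly complex R}) (phi : lcoef_ty n (msubE n j)),
        isMOP mom n P -> isPhi mom n (msubE n j) phi ->
        forall z : complex R, z != 0 ->
          P.[z + z^-1] = leval n (msubE n j) phi z + leval n (msubE n j) phi z^-1).
Proof.
have mom_even l k : mom l (- k) = mom l k.
  by case: k => k; rewrite ?NegzE ?opprK hsym.
split; first exact: perfect_system hr mom_even hnn hnS.
move=> n; split=> [phi phi_Phi | ].
  exact: (alphaPhi_neqN1 hr mom_even hnn hnS phi_Phi).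
split=> [P phi | j nj P phi] P_mop phi_Phi z z0.
- exact: (isMOP_Phi_nn hr mom_even hnn hnS P_mop phi_Phi z0).
- exact: (isMOP_Phi_nm hr mom_even hnn hnS nj P_mop phi_Phi z0).
Qed.
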